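(* Let $G$ be a Hausdorff compact topological monoid with neutral element $e$, and let $f:G\to G$ be a continuous mapping such that for each $x,y\in G$ and each neighbourhood $V$ of $e$ there exist $z\in G$ and $n\in\mathbb{N}$ with $f^n(x),f^n(y)\in zV$. Then $f$ has a unique fixed point.
   Context: A topological monoid is a semigroup with neutral element, equipped with a topology making multiplication jointly continuous. $zV=\{zv:v\in V\}$; $f^n$ is the $n$-fold iterate of $f$. *)

From HB Require Import structures.
From mathcomp Require Import all_boot all_order all_algebra.
From mathcomp Require Import all_classical all_reals all_analysis.
Set Implicit Arguments. Unset Strict Implicit. Unset Printing Implicit Defensive.
Local Open Scope classical_set_scope.

Definition topological_monoid (G : topologicalType) (mul : G -> G -> G) (e : G) : Prop :=
  [/\ forall x y z, mul x (mul y z) = mul (mul x y) z,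
      forall x, mul e x = x,
      forall x, mul x e = x &
      continuous (fun p : G * G => mul p.1 p.2)].

Definition lmul_set (G : Type) (mul : G -> G -> G) (z : G) (V : set G) : set G :=
  [set mul z v | v in V].

(* If R is a relation on G such that for every neighbourhood V of e some
   translate zV satisfies R ∩ (zV × zV) ≠ ∅, then the sets of such
   centres z form a proper filter base; a cluster point z of it exists by
   compactness, and continuity of the multiplication at (z, e) puts (z, z) in
   the closure of R.  For R the graph of f, witnessed by the pairs
   (f^n e, f^n (f e)), the graph is closed, so f z = z.  For R = {(p, q)} with
   p, q fixed points the iterates stay put, and since points of G × G are
   closed, p = z = q. *)

From mathcomp Require Import all_boot all_order all_algebra.
From mathcomp Require Import all_classical all_reals all_analysis.
Local Open Scope classical_set_scope.

Lemma closed_eqfun {T U : topologicalType} {h k : T -> U} :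
  hausdorff_space U -> continuous h -> continuous k -> closed [set x | h x = k x].
Proof.
move=> hU hc kc x clx; apply: hU => A B hA hB.
have hkAB : nbhs x (h @^-1` A `&` k @^-1` B) by apply: filterI; [exact: hc | exact: kc].
have [y [hky [Ay By]]] := clx _ hkAB.
by exists (h y); split => //; rewrite hky.
Qed.

Lemma fst_continuous {T U : topologicalType} : continuous (@fst T U).
Proof. by move=> [x y]; exact: cvg_fst. Qed.

Lemma snd_continuous {T U : topologicalType} : continuous (@snd T U).
Proof. by move=> [x y]; exact: cvg_snd. Qed.

Lemma closed_pair {T U : topologicalType} (p : T) (q : U) :
  hausdorff_space T -> hausdorff_space U -> closed [set (p, q)].
Proof.
move=> hT hU; have -> : [set (p, q)] = [set xy | xy.1 = p] `&` [set xy | xy.2 = q].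
  by apply/seteqP; split => [_ -> // | [x y] /= [-> ->]].
apply: closedI; apply: closed_eqfun => //.
- exact: @fst_continuous T U.
- exact: cst_continuous.
- exact: @snd_continuous T U.
- exact: cst_continuous.
Qed.

Lemma lmul_setS (G : Type) (mul : G -> G -> G) z (V W : set G) :
  V `<=` W -> lmul_set mul z V `<=` lmul_set mul z W.
Proof. exact: image_subset. Qed.

Section CompactMonoid.
Context {G : topologicalType} {mul : G -> G -> G} {e : G}.
Hypotheses (mul_cont : continuous (fun p : G * G => mul p.1 p.2))
  (mulxe : forall x, mul x e = x) (G_compact : compact [set: G]).

Let close_pairs (R : set (G * G)) (V : set G) :=
  [set z | R `&` (lmul_set mul z V `*` lmul_set mul z V) !=set0].

Lemma closure_diag_of_lmul_meets (R : set (G * G)) :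
  (forall V, nbhs e V -> exists z, R `&` (lmul_set mul z V `*` lmul_set mul z V) !=set0) ->
  exists z, closure R (z, z).
Proof.
move=> Rclose.
pose F := filter_from (nbhs e) (close_pairs R).
have close_pairsS V W : V `<=` W -> close_pairs R V `<=` close_pairs R W.
  move=> VW z [ab [Rab [Va Vb]]].
  by exists ab; split => //; split; apply: lmul_setS VW _ _.
have F_proper : ProperFilter F.
  apply: filter_from_proper; last by move=> V /Rclose.
  apply: filter_from_filter; first by exists setT; exact: filterT.
  move=> V W eV eW; exists (V `&` W); first exact: filterI.
  by move=> z Sz; split; apply: close_pairsS Sz => ? [].
have [z [_ Fz]] := G_compact F F_proper filterT.
exists z => N [[A B] /= [zA zB] ABN].
have zeAB : nbhs (mul z e) (A `&` B) by rewrite mulxe; exact: filterI.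
have [[U1 U2] /= [zU1 eU2] U12AB] := mul_cont (z, e) _ zeAB.
have FU2 : F (close_pairs R U2) by exists U2.
have [z' [[ab [Rab [[v U2v av] [w U2w bw]]]] U1z']] := Fz _ _ FU2 zU1.
exists ab; split => //; apply: ABN; rewrite /= -av -bw.
by split; [apply: (U12AB (z', v) (conj U1z' U2v)).1
          | apply: (U12AB (z', w) (conj U1z' U2w)).2].
Qed.

End CompactMonoid.

Theorem theorem14 (G : topologicalType) (mul : G -> G -> G) (e : G)
  (f : G -> G) :
  topological_monoid mul e ->
  hausdorff_space G ->
  compact [set: G] ->
  continuous f ->
  (forall (x y : G) (V : set G), nbhs e V ->
     exists (z : G) (n : nat),
       lmul_set mul z V (iter n f x) /\ lmul_set mul z V (iter n f y)) ->
  exists! p : G, f p = p.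
Proof.
move=> [_ _ mulxe mul_cont] G_hausdorff G_compact f_cont orbits_close.
have f_fst_cont : continuous (f \o @fst G G).
  by move=> xy; apply: continuous_comp; [exact: fst_continuous | exact: f_cont].
have [z /(closed_eqfun G_hausdorff f_fst_cont snd_continuous) fz] :
    exists z, closure [set xy | f xy.1 = xy.2] (z, z).
  apply: (closure_diag_of_lmul_meets mul_cont mulxe G_compact) => V eV.
  have [w [n [Ve Vfe]]] := orbits_close e (f e) V eV.
  by exists w, (iter n f e, iter n f (f e)); split => //=; rewrite -iterS iterSr.
exists z; split => // q fq.
have [w zq_w] : exists w, closure [set (z, q)] (w, w).
  apply: (closure_diag_of_lmul_meets mul_cont mulxe G_compact) => V eV.
  have [w [n]] := orbits_close z q V eV; rewrite !iter_fix // => -[Vz Vq].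
  by exists w, (z, q).
by case: (closed_pair z q G_hausdorff G_hausdorff _ zq_w) => <- <-.
Qed.
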